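(* Let $q\equiv 1\pmod 6$ be a prime power, let $\rho$ be a primitive element of $\mathbb F_q$, and let $\pi : (\mathbb Z_2^2)^* \to \mathbb Z_3$ be a bijection. Suppose $c = c^3_q(1,2)$ is odd and $l = (c+1)/2$. Then $\operatorname{Cay}(G_{l,2,q},S(\pi))$ is edge-regular with parameters $(4lq,\ 4l-2+q,\ 4l-2)$ and has a regular clique of order $4l$.
   Context: For an additive group $A$, $A^*=A\setminus\{0\}$. $G_{l,2,q}=\mathbb Z_l\oplus\mathbb Z_2^2\oplus\mathbb F_q$. $S_0=\{(g,0): g\in(\mathbb Z_l\oplus\mathbb Z_2^2)^*\}$; for $z\in(\mathbb Z_2^2)^*$, $S_{z,\pi}=\{(0,z,\rho^j): j\in\mathbb Z,\ j\equiv\pi(z)\pmod 3\}$; $S(\pi)=S_0\cup\bigcup_z S_{z,\pi}$; $\operatorname{Cay}(G_{l,2,q},S(\pi))$ has vertex set $G_{l,2,q}$ with $x\sim y$ iff $y-x\in S(\pi)$. Write $q=6r+1$; $C^3_q(i)=\{\rho^{3j+i}:0\le j\le 2r-1\}$ for $i\in\mathbb Z_3$, $c^3_q(a,b)=|(C^3_q(a)+1)\cap C^3_q(b)|$. A graph is edge-regular with parameters $(N,k,\lambda)$ if it is non-empty, has $N$ vertices, is $k$-regular, and every two adjacent vertices have exactly $\lambda$ common neighbours. A clique $\mathcal C$ is regular if every vertex outside $\mathcal C$ is adjacent to the same number $e>0$ of vertices of $\mathcal C$. *)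

From HB Require Import structures.
From mathcomp Require Import all_boot all_order all_algebra all_field.
Set Implicit Arguments. Unset Strict Implicit. Unset Printing Implicit Defensive.
Import GRing.Theory.
Local Open Scope ring_scope.

(* Z_l for l >= 1, as 'I_(l.-1).+1 (which has a canonical zmodType
   structure); equal to 'I_l whenever l >= 1. *)
Definition Zl (l : nat) := 'I_(l.-1).+1.
HB.instance Definition _ (l : nat) := GRing.Zmodule.on (Zl l).
HB.instance Definition _ (l : nat) := Finite.on (Zl l).

Definition Z22 := ('I_2 * 'I_2)%type.

Definition nzZ22 := {z : Z22 | z != 0}.

Definition Gl2q (l : nat) (F : finFieldType) := ((Zl l * Z22) * F)%type.

(* S(pi) = S_0 \cup \bigcup_z S_{z,pi}.  The exponents j range over
   0 <= j < q; since 3 | q-1 = order of rho, this gives exactly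
   {rho^j : j in Z, j = pi z mod 3}. *)
Definition inS (l : nat) (F : finFieldType) (rho : F) (pi : nzZ22 -> 'I_3)
  (x : Gl2q l F) : bool :=
  ((x.2 == 0) && (x.1 != 0)) ||
  ((x.1.1 == 0) &&
   [exists z : nzZ22, (x.1.2 == val z) &&
      [exists j : 'I_#|F|, (j %% 3 == pi z)%N && (x.2 == rho ^+ j)]]).

Definition cay_adj (l : nat) (F : finFieldType) (rho : F) (pi : nzZ22 -> 'I_3)
  : rel (Gl2q l F) := fun x y => inS rho pi (y - x).

(* cyclotomic classes C^3_q(i) = {rho^(3j+i) : 0 <= j <= 2r-1}, q = 6r+1 *)
Definition cyc_class (F : finFieldType) (rho : F) (i : nat) : {set F} :=
  [set rho ^+ (3 * j + i) | j : 'I_(2 * ((#|F|.-1) %/ 6))].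

Definition cyc_num (F : finFieldType) (rho : F) (a b : nat) : nat :=
  #|[set x + 1 | x in cyc_class rho a] :&: cyc_class rho b|.

Definition edge_regular (V : finType) (adj : rel V) (N k lam : nat) : Prop :=
  [/\ exists x y, adj x y,
      #|V| = N,
      forall x, #|[set y | adj x y]| = k &
      forall x y, adj x y -> #|[set z | adj x z && adj y z]| = lam].

Definition is_clique (V : finType) (adj : rel V) (C : {set V}) : Prop :=
  forall x y, x \in C -> y \in C -> x != y -> adj x y.

Definition regular_clique (V : finType) (adj : rel V) (C : {set V}) : Prop :=
  is_clique adj C /\
  exists e : nat, (0 < e)%N /\
    forall v, v \notin C -> #|[set y in C | adj v y]| = e.

(* Write H = Z_l + Z_2^2 and z_b = pi^-1 (class of b) for b ≠ 0, so that
   S(pi) = (H ∖ 0) × {0}  ∪  {((0, z_b), b) : b ≠ 0}.  The graph is a Cayley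
   graph, so its degree is |S(pi)| = (4l - 1) + (q - 1), and two adjacent
   vertices x, y have |S(pi) ∩ (S(pi) + s)| common neighbours, s = y - x.
   For s in (H ∖ 0) × {0} these are the other 4l - 2 elements of that layer.
   For s = ((0, z_a), a) they are the ((0, z_b), b) with z_b - z_a = z_(b-a);
   since in Z_2^2 the sum of two distinct nonzero elements is the third, this
   says that a, b, b - a lie in three distinct cubic classes.  Scaling by a^-1
   and the involution y |-> 1 - y (which swaps the classes of y and y - 1, as
   -1 is a cube when q ≡ 1 mod 6) show there are 2 c^3_q(1,2) = 4l - 2 such b.
   Finally H × {0} is a clique of size 4l and every vertex (h, b), b ≠ 0, has
   exactly one neighbour in it, namely (h + (0, z_(-b)), 0). *)

From HB Require Import structures.
From mathcomp Require Import all_boot all_order all_algebra all_field.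
From mathcomp Require Import zify.
Set Implicit Arguments. Unset Strict Implicit. Unset Printing Implicit Defensive.
Import GRing.Theory.
Local Open Scope ring_scope.

Lemma card_pred_mod6 (F : finFieldType) : (#|F| %% 6 = 1)%N ->
  #|F|.-1 = (6 * (#|F|.-1 %/ 6))%N /\ (0 < #|F|.-1 %/ 6)%N.
Proof. by have := finNzRing_gt1 F; case: #|F| => [|n] //=; lia. Qed.

Lemma natr_Z3_eq m n : m = n %[mod 3] -> (m%:R : 'I_3) = n%:R.
Proof. by move=> eq_mod; apply: val_inj; rewrite !Zp_nat /= eq_mod. Qed.

Section CyclotomicIndex.

Variables (F : finFieldType) (rho : F).
Hypothesis rho_prim : (#|F|.-1).-primitive_root rho.
Hypothesis card_mod6 : (#|F| %% 6 = 1)%N.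

Definition dlog (a : F) : nat :=
  if [pick i : 'I_(#|F|.-1) | rho ^+ i == a] is Some i then val i else 0.

Lemma dlog_lt a : (dlog a < #|F|.-1)%N.
Proof.
rewrite /dlog; case: pickP => [i _|_]; first exact: ltn_ord.
by case: #|F| (finNzRing_gt1 F) => [|[|n]].
Qed.

Lemma dlogK a : a != 0 -> rho ^+ dlog a = a.
Proof.
move=> a_nz; rewrite /dlog; case: pickP => [i /eqP // | no_log].
have a_unity : a ^+ #|F|.-1 = 1.
  apply: (mulfI a_nz); rewrite mulr1 -exprS prednK ?expf_card //.
  exact/card_gt0P/(ex_intro _ 0).
by have [i a_eq] := prim_rootP rho_prim a_unity; have := no_log i; rewrite a_eq eqxx.
Qed.

Lemma prim_root_neq0 : rho != 0.
Proof.
have n_gt0 : (0 < #|F|.-1)%N by case: #|F| (finNzRing_gt1 F) => [|[|n]].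
apply/eqP=> rho0; have := prim_expr_order rho_prim.
by rewrite rho0 expr0n gtn_eqF // => /esym/eqP; rewrite oner_eq0.
Qed.

(* [dlog 0 = 0] is a junk value: the lemmas on [cyc_index a] assume [a != 0]. *)
Definition cyc_index (a : F) : 'I_3 := (dlog a)%:R.

Lemma cyc_index_exp k : cyc_index (rho ^+ k) = k%:R.
Proof.
have := dlogK (expf_neq0 k prim_root_neq0).
move/eqP; rewrite (eq_prim_root_expr rho_prim) => /eqP eq_mod.
have [card_eq _] := card_pred_mod6 card_mod6.
have dvd3 : (3 %| #|F|.-1)%N by rewrite card_eq (mulnC 6) dvdn_mull.
by apply: natr_Z3_eq; rewrite -(modn_dvdm _ dvd3) eq_mod (modn_dvdm _ dvd3).
Qed.

Lemma cyc_indexM a b : a != 0 -> b != 0 ->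
  cyc_index (a * b) = cyc_index a + cyc_index b.
Proof.
move=> a_nz b_nz.
by rewrite -{1}(dlogK a_nz) -{1}(dlogK b_nz) -exprD cyc_index_exp natrD.
Qed.

Lemma cyc_indexN1 : cyc_index (-1) = 0.
Proof.
have [card_eq r_gt0] := card_pred_mod6 card_mod6.
set r := (#|F|.-1 %/ 6)%N in card_eq r_gt0.
suff <- : rho ^+ (3 * r) = -1.
  by rewrite cyc_index_exp; apply: val_inj; rewrite Zp_nat /= modnMr.
have : (rho ^+ (3 * r)) ^+ 2 == 1.
  by rewrite -exprM -(prim_expr_order rho_prim) card_eq mulnAC.
rewrite sqrf_eq1 => /orP [|/eqP //].
rewrite -(expr0 rho) (eq_prim_root_expr rho_prim) card_eq mod0n => /eqP.
by rewrite modn_small; lia.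
Qed.

Lemma cyc_indexN a : a != 0 -> cyc_index (- a) = cyc_index a.
Proof.
move=> a_nz; rewrite -mulN1r cyc_indexM ?cyc_indexN1 ?add0r //.
by rewrite oppr_eq0 oner_eq0.
Qed.

Lemma mem_cyc_class a i : (i < 3)%N ->
  (a \in cyc_class rho i) = (a != 0) && (cyc_index a == i%:R).
Proof.
move=> i_lt3; apply/imsetP/andP => [[j _ ->]|[a_nz /eqP a_idx]].
  rewrite expf_neq0 ?prim_root_neq0 // cyc_index_exp.
  by split=> //; apply/eqP/natr_Z3_eq; rewrite mulnC modnMDl.
have [card_eq _] := card_pred_mod6 card_mod6.
have dlog_mod3 : (dlog a %% 3 = i)%N.
  by have := congr1 val a_idx; rewrite /cyc_index !Zp_nat /= (modn_small i_lt3).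
have j_lt : (dlog a %/ 3 < 2 * (#|F|.-1 %/ 6))%N by have := dlog_lt a; lia.
exists (Ordinal j_lt) => //=.
by rewrite -dlog_mod3 mulnC -divn_eq dlogK.
Qed.

Lemma exists_exp_cyc_index a (i : 'I_3) :
  [exists j : 'I_#|F|, (j %% 3 == i)%N && (a == rho ^+ j)] =
  (a != 0) && (cyc_index a == i).
Proof.
apply/existsP/andP => [[j /andP [/eqP j_mod /eqP ->]]|[a_nz /eqP a_idx]].
  rewrite expf_neq0 ?prim_root_neq0 // cyc_index_exp -[X in _ == X]natr_Zp.
  by split=> //; apply/eqP/natr_Z3_eq; rewrite j_mod modn_small.
have j_lt : (dlog a < #|F|)%N by have := dlog_lt a; case: #|F| => [|n] //= /ltnW.
exists (Ordinal j_lt); rewrite /= dlogK // eqxx andbT.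
by rewrite -a_idx /cyc_index Zp_nat.
Qed.

Definition cyc_pair_set (i j : 'I_3) : {set F} :=
  [set y | [&& y != 0, y != 1, cyc_index y == i & cyc_index (y - 1) == j]].

Lemma cyc_num_pair_set : cyc_num rho 1 2 = #|cyc_pair_set 2 1|.
Proof.
apply: eq_card => y; rewrite !inE.
have -> : (y \in [set x + 1 | x in cyc_class rho 1]) = (y - 1 \in cyc_class rho 1).
  apply/imsetP/idP => [[x x_in ->]|y1]; first by rewrite addrK.
  by exists (y - 1); rewrite ?subrK.
rewrite !mem_cyc_class // subr_eq0.
by case: (y == 0); case: (y == 1); rewrite //= andbC.
Qed.

Lemma cyc_pair_set_swap i j : cyc_pair_set i j = [set 1 - y | y in cyc_pair_set j i].
Proof.
apply/setP => y; rewrite (can2_imset_pre _ (subKr 1) (subKr 1)) !inE.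
have [->|y_nz] := eqVneq y 0; first by rewrite subr0 !eqxx /= andbF.
have [->|y_n1] := eqVneq y 1; first by rewrite subrr !eqxx.
have y1_nz : y - 1 != 0 by rewrite subr_eq0.
rewrite (addrAC (1 : F)) subrr add0r cyc_indexN // -opprB cyc_indexN //.
rewrite oppr_eq0 y1_nz eqr_oppLR subr_eq addNr y_nz.
by rewrite /= andbC.
Qed.

Definition cyc_triangles (a : F) : {set F} :=
  [set b | [&& b != 0, b != a & uniq [:: cyc_index a; cyc_index b; cyc_index (b - a)]]].

Lemma cyc_index1 : cyc_index 1 = 0.
Proof. by rewrite -(expr0 rho) cyc_index_exp. Qed.

Lemma cyc_triangles_scale a : a != 0 -> cyc_triangles a = [set a * y | y in cyc_triangles 1].
Proof.
move=> a_nz; apply/setP => b.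
have [y ->] : exists y, b = a * y by exists (a^-1 * b); rewrite mulVKf.
rewrite mem_imset; last exact: mulfI.
have ay_sub : a * y - a = a * (y - 1) by rewrite mulrBr mulr1.
rewrite !inE -[a * y == a]subr_eq0 ay_sub !mulf_eq0 (negbTE a_nz) !orFb subr_eq0.
have [->|y_nz] := eqVneq y 0; first by [].
have [->|y_n1] := eqVneq y 1; first by [].
rewrite !cyc_indexM ?subr_eq0 // cyc_index1.
by rewrite -(map_inj_uniq (addrI (cyc_index a)) [:: 0; cyc_index y; _]) /= addr0.
Qed.

Lemma cyc_triangles1 : cyc_triangles 1 = cyc_pair_set 2 1 :|: cyc_pair_set 1 2.
Proof.
apply/setP => y; rewrite !inE cyc_index1.
case: (y == 0); case: (y == 1) => //=.
by case: (cyc_index y) (cyc_index (y - 1)) => [[|[|[|?]]] ?] [[|[|[|?]]] ?].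
Qed.

Lemma card_cyc_triangles a : a != 0 -> #|cyc_triangles a| = (2 * cyc_num rho 1 2)%N.
Proof.
move=> a_nz; rewrite cyc_triangles_scale // card_imset; last exact: mulfI.
have disjoint_pairs : cyc_pair_set 2 1 :&: cyc_pair_set 1 2 = set0.
  by apply/setP => y; rewrite !inE; case: (cyc_index y) => [[|[|[|?]]] ?]; rewrite ?andbF.
rewrite cyc_triangles1 cardsU disjoint_pairs cards0 subn0.
rewrite [cyc_pair_set 1 2]cyc_pair_set_swap card_imset; last exact: can_inj (subKr 1).
by rewrite cyc_num_pair_set addnn mul2n.
Qed.

End CyclotomicIndex.

Lemma Z22_addxx (u : Z22) : u + u = 0.
Proof. by apply/eqP; case: u => [[[|[|//]] ?] [[|[|//]] ?]]. Qed.

Lemma Z22_subr_eq (u v t : Z22) : u != 0 -> v != 0 -> t != 0 ->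
  (v - u == t) = uniq [:: u; v; t].
Proof.
by case: u => [[[|[|//]] ?] [[|[|//]] ?]]; case: v => [[[|[|//]] ?] [[|[|//]] ?]];
  case: t => [[[|[|//]] ?] [[|[|//]] ?]].
Qed.

Lemma mem_imset_pair_const (A B : finType) (b0 : B) (D : {set A}) (w : A * B) :
  (w \in [set (a, b0) | a in D]) = (w.2 == b0) && (w.1 \in D).
Proof.
case: w => a b; apply/imsetP/andP => [[a' a'_in [-> ->]]|[/eqP /= -> a_in]] //.
by exists a.
Qed.

Lemma mem_imset_graph (A B : finType) (f : B -> A) (D : {set B}) (w : A * B) :
  (w \in [set (f b, b) | b in D]) = (w.1 == f w.2) && (w.2 \in D).
Proof.
case: w => a b; apply/imsetP/andP => [[b' b'_in [-> ->]]|[/eqP /= -> b_in]] //.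
by exists b.
Qed.

Lemma card_translate (V : finZmodType) (P : pred V) x :
  #|[set y | P (y - x)]| = #|[set w | P w]|.
Proof.
rewrite -(card_imset _ (addIr x)) (can2_imset_pre _ (addrK x) (subrK x)).
by apply: eq_card => y; rewrite !inE.
Qed.

Lemma cayley_edge_regular (V : finZmodType) (S : pred V) k lam :
  (exists s, S s) -> #|[set w | S w]| = k ->
  (forall s, S s -> #|[set w | S w && S (w - s)]| = lam) ->
  edge_regular (fun x y => S (y - x)) #|V| k lam.
Proof.
move=> [s Ss] card_S card_common; split=> //.
- by exists 0, s; rewrite subr0.
- by move=> x; rewrite card_translate.
- move=> x y Sxy; rewrite -(card_common _ Sxy).
  rewrite -(card_translate (fun w => S w && S (w - (y - x))) x).
  by apply: eq_card => z; rewrite !inE opprB addrA subrK.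
Qed.

HB.instance Definition _ (l : nat) (F : finFieldType) := GRing.Zmodule.on (Gl2q l F).
HB.instance Definition _ (l : nat) (F : finFieldType) := Finite.on (Gl2q l F).

Lemma card_Zl_Z22 l : (0 < l)%N -> #|{: Zl l * Z22}| = (4 * l)%N.
Proof. by move=> l_gt0; rewrite !card_prod !card_ord prednK // mulnC. Qed.

Section ConnectionSet.

Variables (l : nat) (F : finFieldType) (rho : F) (pi : nzZ22 -> 'I_3) (g : 'I_3 -> nzZ22).
Hypothesis rho_prim : (#|F|.-1).-primitive_root rho.
Hypothesis card_mod6 : (#|F| %% 6 = 1)%N.
Hypotheses (piK : cancel pi g) (gK : cancel g pi).

Definition label (b : F) : Z22 := val (g (cyc_index rho b)).

Local Notation S := (inS (l := l) rho pi).

Lemma inSE w :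
  S w = ((w.2 == 0) && (w.1 != 0)) || ((w.1 == (0, label w.2)) && (w.2 != 0)).
Proof.
rewrite /inS; congr (_ || _); case: w => [[h1 h2] b] /=.
rewrite xpair_eqE -andbA; congr (_ && _); apply/existsP/andP.
  case=> z /andP [/eqP ->]; rewrite exists_exp_cyc_index // => /andP [b_nz /eqP b_idx].
  by rewrite /label b_idx piK.
case=> /eqP -> b_nz; exists (g (cyc_index rho b)).
by rewrite eqxx exists_exp_cyc_index // b_nz gK eqxx.
Qed.

Lemma label_neq0 b : label b != 0.
Proof. exact: valP (g (cyc_index rho b)). Qed.

Lemma labelN b : b != 0 -> label (- b) = label b.
Proof. by move=> b_nz; rewrite /label cyc_indexN. Qed.

Lemma uniq_label (s : seq F) : uniq (map label s) = uniq (map (cyc_index rho) s).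
Proof.
rewrite (map_comp (val \o g) (cyc_index rho)) map_inj_uniq //.
exact: inj_comp val_inj (can_inj gK).
Qed.

Let S0 : {set Gl2q l F} := [set (h, 0) | h in [set~ (0 : Zl l * Z22)]].
Let S1 : {set Gl2q l F} := [set ((0, label b), b) | b in [set~ (0 : F)]].

Lemma card_inS : (0 < l)%N -> #|[set w | S w]| = (4 * l - 2 + #|F|)%N.
Proof.
move=> l_gt0; have q_gt1 : (1 < #|F|)%N := finNzRing_gt1 F.
have -> : [set w | S w] = S0 :|: S1.
  apply/setP => w; rewrite inE inSE in_setU mem_imset_pair_const.
  by rewrite (mem_imset_graph (fun b => (0, label b))) !in_setC1.
rewrite cardsU; have -> : S0 :&: S1 = set0.
  apply/setP => w; rewrite !inE mem_imset_pair_const (mem_imset_graph (fun b => (0, label b))).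
  by rewrite !in_setC1; case: eqP; rewrite ?andbF.
rewrite cards0 subn0 !card_imset; try by move=> ? ? [].
rewrite !cardsC1 card_Zl_Z22 // -!subn1; set q := #|F| in q_gt1 *; lia.
Qed.

Lemma card_common_inS0 s : (0 < l)%N -> s.2 = 0 -> s.1 != 0 ->
  #|[set w | S w && S (w - s)]| = (4 * l - 2)%N.
Proof.
move=> l_gt0; case: s => h0 b0 /= -> h0_nz.
have -> : [set w | S w && S (w - (h0, 0))] = [set (h, 0) | h in [set~ (0 : Zl l * Z22)] :\ h0].
  apply/setP => [[h b]]; rewrite inE mem_imset_pair_const !inSE !inE /= subr0 subr_eq0.
  have [->|b_nz] := eqVneq b 0; first by rewrite /= !andbF !orbF andbC.
  rewrite /= !andbT; apply/negbTE/negP => /andP [/eqP -> ].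
  by rewrite -[X in _ == X]addr0 (inj_eq (addrI _)) oppr_eq0 (negbTE h0_nz).
rewrite card_imset; last by move=> ? ? [].
have := cardsD1 h0 [set~ (0 : Zl l * Z22)].
by rewrite cardsC1 card_Zl_Z22 // !inE h0_nz -subn1; lia.
Qed.

Lemma card_common_inS1 s : s.2 != 0 -> s.1 = (0, label s.2) ->
  #|[set w | S w && S (w - s)]| = #|cyc_triangles rho s.2|.
Proof.
case: s => _ a /= a_nz ->.
have -> : [set w | S w && S (w - ((0, label a), a))] =
          [set ((0, label b), b) | b in cyc_triangles rho a].
  apply/setP => [[h b]]; rewrite inE (mem_imset_graph (fun b => (0, label b))) !inSE /=.
  have [->|b_nz] := eqVneq b 0.
    rewrite sub0r oppr_eq0 (negbTE a_nz) labelN // inE eqxx /= !andbF !orbF andbT subr_eq.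
    have -> : (0, label a) + (0, label a) = 0 :> Zl l * Z22.
      by apply: injective_projections; rewrite /= ?addr0 ?Z22_addxx.
    by case: eqP.
  rewrite /= andbT; case: eqP => [->|_] //.
  have -> : (0, label b) - (0, label a) = (0, label b - label a) :> Zl l * Z22.
    by apply: injective_projections; rewrite /= ?subrr.
  have [->|b_na] := eqVneq b a; first by rewrite !subrr eqxx !inE eqxx /= !andbF.
  rewrite subr_eq0 (negbTE b_na) /= andbT xpair_eqE eqxx /=.
  rewrite Z22_subr_eq ?label_neq0 // inE b_nz b_na /=.
  exact: (uniq_label [:: a; b; b - a]).
by rewrite card_imset; last by move=> ? ? [].
Qed.

Definition zero_layer : {set Gl2q l F} := [set w | w.2 == 0].

Lemma card_zero_layer : (0 < l)%N -> #|zero_layer| = (4 * l)%N.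
Proof.
move=> l_gt0; have -> : zero_layer = [set (h, 0 : F) | h in [set: Zl l * Z22]].
  by apply/setP => w; rewrite inE mem_imset_pair_const inE andbT.
by rewrite card_imset ?cardsT ?card_Zl_Z22 // => h h' [].
Qed.

Lemma zero_layer_nbhd v : v.2 != 0 ->
  [set y in zero_layer | cay_adj rho pi v y] = [set (v.1 + (0, label (- v.2)), 0)].
Proof.
case: v => h0 b0 /= b0_nz; apply/setP => [[h b]].
rewrite !inE /cay_adj inSE /= [in RHS]xpair_eqE andbC.
have [->|b_nz] := eqVneq b 0; last by rewrite !andbF.
by rewrite sub0r oppr_eq0 (negbTE b0_nz) /= !andbT subr_eq addrC.
Qed.

Lemma zero_layer_regular : regular_clique (cay_adj rho pi) zero_layer.
Proof.
split.
  move=> [h b] [h' b']; rewrite !inE /= => /eqP -> /eqP -> h_neq.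
  rewrite /cay_adj inSE /= subrr eqxx /= subr_eq0.
  by rewrite andbF orbF; apply: contraNneq h_neq => ->.
exists 1%N; split=> // v; rewrite inE => v2_nz.
by rewrite zero_layer_nbhd // cards1.
Qed.

End ConnectionSet.

Theorem theorem3p6 (F : finFieldType) (rho : F) (pi : nzZ22 -> 'I_3)
    (c l : nat) :
  (#|F| %% 6 = 1)%N ->
  (#|F|.-1).-primitive_root rho ->
  bijective pi ->
  c = cyc_num rho 1 2 ->
  odd c ->
  l = ((c + 1) %/ 2)%N ->
  edge_regular (cay_adj (l := l) rho pi)
    (4 * l * #|F|) (4 * l - 2 + #|F|) (4 * l - 2)
  /\ exists C : {set Gl2q l F},
       regular_clique (cay_adj (l := l) rho pi) C /\ #|C| = (4 * l)%N.
Proof.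
move=> card_mod6 rho_prim [g piK gK] c_def c_odd l_def.
have c_mod2 : (c %% 2 = 1)%N by rewrite modn2 c_odd.
have l_gt0 : (0 < l)%N by lia.
have lam_eq : (4 * l - 2 = 2 * c)%N by lia.
have inS_E := inSE rho_prim card_mod6 piK gK.
split; last first.
  by exists (zero_layer l F); split; [exact: zero_layer_regular | exact: card_zero_layer].
have card_V : #|{: Gl2q l F}| = (4 * l * #|F|)%N by rewrite card_prod card_Zl_Z22.
rewrite -card_V; apply: cayley_edge_regular.
- by exists ((0, label rho g 1), 1); rewrite inS_E /= eqxx oner_neq0 orbT.
- exact: card_inS.
- move=> s; rewrite inS_E => /orP [/andP [/eqP s2 s1]|/andP [/eqP s1 s2]].
    exact: card_common_inS0.
  rewrite (card_common_inS1 rho_prim card_mod6 piK gK) //.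
  by rewrite card_cyc_triangles // -c_def lam_eq.
Qed.
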